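(* (a) Let $K$ be a division ring and $\sigma$ an automorphism of $K$ of finite order $n$ such that no $\sigma^i$ with $1\le i<n$ is an inner automorphism. Then in $K[t;\sigma]$ the set of right roots of $t^n-1$ is exactly $\Delta^\sigma(1)=\{\sigma(x)x^{-1}\mid 0\ne x\in K\}$, and no nonzero polynomial of degree $<n$ in $K[t;\sigma]$ vanishes at every element of $\Delta^\sigma(1)$ (so $t^n-1$ is the minimal polynomial of $\Delta^\sigma(1)$). (b) Let $K$ be a division ring of characteristic $p>0$ and $\delta$ a derivation of $K$ with $\delta^{p^n}=0$ and satisfying no nontrivial identity $\sum_{i=0}^{m}c_i\delta^i=0$ ($c_i\in K$, not all zero) with $m<p^n$. Then in $K[t;\delta]$ the set of right roots of $t^{p^n}$ is exactly $\Delta^\delta(0)=\{\delta(x)x^{-1}\mid 0\ne x\in K\}$, and no nonzero polynomial of degree $<p^n$ vanishes at every element of $\Delta^\delta(0)$.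
   Context: $K[t;\sigma]$ is the skew polynomial ring with $ta=\sigma(a)t$; $K[t;\delta]$ is the differential polynomial ring with $ta=at+\delta(a)$. For $f$ in such a ring $R$ and $a\in K$, $f(a)$ is the unique element of $K$ with $f-f(a)\in R(t-a)$; $a$ is a right root of $f$ if $f(a)=0$. *)

From HB Require Import structures.
From mathcomp Require Import all_boot all_order all_algebra.
Set Implicit Arguments. Unset Strict Implicit. Unset Printing Implicit Defensive.
Import Order.TTheory GRing.Theory.
Local Open Scope ring_scope.

(* Ore extension K[t; s, d] with  t a = s(a) t + d(a).
   An element sum_i c_i t^i (coefficients on the LEFT) is represented by the
   polynomial with coefficient sequence (c_i), i.e. an element of {poly K}
   used only as an additive group / coefficient container; the ring product
   of {poly K} is NOT the skew product, which is [skmul] below.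
   K[t;sigma] = K[t; sigma, 0], K[t;delta] = K[t; id, delta]. *)

(* left multiplication by t:  t * (sum_j b_j t^j) = sum_j (s(b_j) t^(j+1) + d(b_j) t^j) *)
Definition tmul (K : unitRingType) (s d : K -> K) (g : {poly K}) : {poly K} :=
  'X * \poly_(i < size g) s g`_i + \poly_(i < size g) d g`_i.

Definition skmul (K : unitRingType) (s d : K -> K) (f g : {poly K}) : {poly K} :=
  \sum_(i < size f) (f`_i)%:P * iter (nat_of_ord i) (tmul s d) g.

(* a is a right root of f :  f(a) = 0, i.e. f - 0 \in R (t - a), i.e. f \in R(t - a) *)
Definition rroot (K : unitRingType) (s d : K -> K) (f : {poly K}) (a : K) : Prop :=
  exists q : {poly K}, f = skmul s d q ('X - a%:P).

(* division ring: every nonzero element is a unit (unitRingType is nontrivial) *)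
Definition division_ring (K : unitRingType) : Prop :=
  forall x : K, x != 0 -> x \is a GRing.unit.

Definition inner_aut (K : unitRingType) (f : K -> K) : Prop :=
  exists u : K, u \is a GRing.unit /\ forall x, f x = u * x * u^-1.

Definition derivation (K : unitRingType) (d : K -> K) : Prop :=
  (forall a b, d (a + b) = d a + d b) /\ (forall a b, d (a * b) = d a * b + a * d b).

From Pilot Require Import Defs.
From HB Require Import structures.
From mathcomp Require Import all_boot all_order all_algebra.
From Stdlib Require Import Classical.
Import GRing.Theory.
Local Open Scope ring_scope.
Set Implicit Arguments. Unset Strict Implicit.

(* We work in a general Ore extension K[t;s,d] and use Lam–Leroy's evaluation:
   - the norms N_0(a) = 1, N_(k+1)(a) = s(N_k(a)) a + d(N_k(a)) are the
     remainders of t^k modulo t - a, so f(a) = Σ f_i N_i(a) and a is a right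
     root of f iff Σ f_i N_i(a) = 0 ([rroot_skeval]);
   - for the (s,d)-conjugate a^x = s(x) a x⁻¹ + d(x) x⁻¹ one has
     N_k(a^x) = T_a^k(x) x⁻¹ with T_a(y) = s(y) a + d(y), hence a^x is a right
     root of f iff Σ f_i T_a^i(x) = 0 ([rroot_conj]).
   Part (a) is the case s = σ, d = 0, a = 1: then T_1 = σ and a^x = σ(x)x⁻¹.
   Minimality follows from the independence of 1, σ, ..., σ^(n-1) over K
   (an Artin-type lemma, which uses that the σ^i are outer), and every root of
   t^n - 1, i.e. every a with N_n(a) = 1, is a conjugate of 1 by a Hilbert 90
   construction.  Part (b) is the case s = id, a = 0: then T_0 = δ and
   a^x = δ(x)x⁻¹; minimality is the hypothesis on δ, and when N_(p^n)(a) = 0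
   the last nonzero norm N_k(a) exhibits a as a conjugate of 0. *)

Lemma sum_ord_widen (V : zmodType) (F : nat -> V) m n : (m <= n)%N ->
  (forall i, (m <= i)%N -> F i = 0) -> \sum_(i < m) F i = \sum_(i < n) F i.
Proof.
move=> le_mn F0; rewrite -(subnKC le_mn) big_split_ord /=.
by rewrite [X in _ = _ + X]big1 ?addr0 // => i _; apply: F0; rewrite leq_addr.
Qed.

Section OreExtension.
Variables (K : unitRingType) (s d : K -> K).
Hypothesis sD : forall x y, s (x + y) = s x + s y.
Hypothesis sM : forall x y, s (x * y) = s x * s y.
Hypothesis s1 : s 1 = 1.
Hypothesis dD : forall x y, d (x + y) = d x + d y.
Hypothesis dM : forall x y, d (x * y) = d x * y + s x * d y.

Lemma s0 : s 0 = 0.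
Proof. by apply: (addrI (s 0)); rewrite -sD !addr0. Qed.

Lemma d0 : d 0 = 0.
Proof. by apply: (addrI (d 0)); rewrite -dD !addr0. Qed.

Lemma d1 : d 1 = 0.
Proof.
have := dM 1 1; rewrite !mulr1 s1 mul1r => d1_twice.
by apply: (addrI (d 1)); rewrite -d1_twice addr0.
Qed.

Lemma sVK x : x \is a GRing.unit -> s x^-1 * s x = 1.
Proof. by move=> Ux; rewrite -sM mulVr. Qed.

Lemma dV x : x \is a GRing.unit -> d x^-1 = - (s x^-1 * d x * x^-1).
Proof.
move=> Ux; apply/eqP; rewrite -subr_eq0 opprK -(mulrK Ux (d x^-1)) -mulrDl.
by rewrite -dM mulVr // d1 mul0r.
Qed.

Local Notation tmul := (tmul s d).

Lemma coef_tmul (g : {poly K}) k :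
  (tmul g)`_k = (if k is k'.+1 then s g`_k' else 0) + d g`_k.
Proof.
have coef_polyF (F : K -> K) i : F 0 = 0 -> (\poly_(j < size g) F g`_j)`_i = F g`_i.
  by move=> F0; rewrite coef_poly; case: ltnP => // le; rewrite nth_default.
by rewrite /Defs.tmul coefD coefXM !coef_polyF ?s0 ?d0 //; case: k.
Qed.

Lemma size_tmul (g : {poly K}) : (size (tmul g) <= (size g).+1)%N.
Proof.
apply/leq_sizeP => -[|j] // lt; rewrite coef_tmul !nth_default ?s0 ?d0 ?addr0 //.
exact: leq_trans lt.
Qed.

Lemma tmulD (f g : {poly K}) : tmul (f + g) = tmul f + tmul g.
Proof.
apply/polyP => k; rewrite !(coef_tmul, coefD) dD.
by case: k => [|k]; rewrite ?add0r // coefD sD addrACA.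
Qed.

Lemma tmul0 : tmul 0 = 0.
Proof. by apply/polyP => -[|k]; rewrite coef_tmul !coef0 ?s0 d0 addr0. Qed.

(* t c = s(c) t + d(c), in the form needed for c h with h a polynomial. *)
Lemma tmulC c (h : {poly K}) : tmul (c%:P * h) = (s c)%:P * tmul h + (d c)%:P * h.
Proof.
apply/polyP => -[|k]; rewrite coef_tmul coefD !coefCM coef_tmul /= ?coefCM dM mulrDr.
  by rewrite mulr0 !add0r addrC.
by rewrite sM -addrA (addrC (d c * _)) addrA.
Qed.

Lemma tmul_polyC c : tmul c%:P = (s c)%:P * 'X + (d c)%:P.
Proof.
rewrite -[c%:P]mulr1 tmulC mulr1; congr (_ * _ + _).
by apply/polyP => -[|[|k]]; rewrite coef_tmul coefX !coef1 /= ?s1 ?d1 ?s0 ?d0 ?addr0.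
Qed.

Lemma tmulXn (k : nat) : tmul ('X^k : {poly K}) = 'X^(k.+1).
Proof.
have sb (b : bool) : s b%:R = b%:R by case: b; rewrite ?s1 ?s0.
have db (b : bool) : d b%:R = 0 by case: b; rewrite ?d1 ?d0.
by apply/polyP => -[|i]; rewrite coef_tmul /= !coefXn db addr0 ?sb.
Qed.

Lemma skmul_widen (f g : {poly K}) m : (size f <= m)%N ->
  skmul s d f g = \sum_(i < m) (f`_i)%:P * iter i tmul g.
Proof.
move=> le_fm; rewrite /skmul.
apply: (@sum_ord_widen _ (fun i => (f`_i)%:P * iter i tmul g)) => // i le.
by rewrite nth_default ?mul0r.
Qed.

Lemma skmul0 (h : {poly K}) : skmul s d 0 h = 0.
Proof. by rewrite /skmul size_poly0 big_ord0. Qed.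

Lemma skmulD (f g h : {poly K}) : skmul s d (f + g) h = skmul s d f h + skmul s d g h.
Proof.
have [lef leg] := (leq_maxl (size f) (size g), leq_maxr (size f) (size g)).
rewrite (skmul_widen _ (size_polyD f g)) (skmul_widen _ lef) (skmul_widen _ leg).
rewrite -big_split; apply: eq_bigr => i _.
by rewrite coefD polyCD mulrDl.
Qed.

Lemma skmulC c (f h : {poly K}) : skmul s d (c%:P * f) h = c%:P * skmul s d f h.
Proof.
have le : (size (c%:P * f)%R <= size f)%N by rewrite mul_polyC size_scale_leq.
rewrite (skmul_widen _ le) (skmul_widen _ (leqnn _)) mulr_sumr.
by apply: eq_bigr => i _; rewrite coefCM polyCM mulrA.
Qed.

Lemma skmul_sum m (F : 'I_m -> {poly K}) h :
  skmul s d (\sum_(i < m) F i) h = \sum_(i < m) skmul s d (F i) h.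
Proof. exact: (big_morph (fun q => skmul s d q h) (fun f g => skmulD f g h) (skmul0 h)). Qed.

Lemma skmul_polyC c (h : {poly K}) : skmul s d c%:P h = c%:P * h.
Proof. by rewrite (skmul_widen _ (size_polyC_leq1 c)) big_ord1 coefC. Qed.

Lemma skmul_tmul (q g : {poly K}) : skmul s d (tmul q) g = tmul (skmul s d q g).
Proof.
rewrite (skmul_widen _ (size_tmul q)).
under eq_bigr => i _ do rewrite coef_tmul polyCD mulrDl.
rewrite /skmul (big_morph tmul tmulD tmul0) big_split /= big_ord_recl /= mul0r add0r.
rewrite big_ord_recr /= nth_default // d0 mul0r addr0 -big_split /=.
by apply: eq_bigr => i _; rewrite tmulC.
Qed.

(* Lam–Leroy norms: N_k(a) is the remainder of t^k on right division by t - a. *)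
Fixpoint norm (k : nat) (a : K) : K :=
  if k is k'.+1 then s (norm k' a) * a + d (norm k' a) else 1.

Definition skeval (f : {poly K}) (a : K) : K := \sum_(i < size f) f`_i * norm i a.

Lemma skeval_widen (f : {poly K}) a m : (size f <= m)%N ->
  skeval f a = \sum_(i < m) f`_i * norm i a.
Proof.
move=> le_fm; apply: (@sum_ord_widen _ (fun i => f`_i * norm i a)) => // i le.
by rewrite nth_default ?mul0r.
Qed.

Lemma skeval0 a : skeval 0 a = 0.
Proof. by rewrite /skeval size_poly0 big_ord0. Qed.

Lemma skevalD (f g : {poly K}) a : skeval (f + g) a = skeval f a + skeval g a.
Proof.
have [lef leg] := (leq_maxl (size f) (size g), leq_maxr (size f) (size g)).
rewrite (skeval_widen _ (size_polyD f g)) (skeval_widen _ lef) (skeval_widen _ leg).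
by rewrite -big_split; apply: eq_bigr => i _; rewrite coefD mulrDl.
Qed.

Lemma skevalN (f : {poly K}) a : skeval (- f) a = - skeval f a.
Proof. by rewrite /skeval size_polyN -sumrN; apply: eq_bigr => i _; rewrite coefN mulNr. Qed.

Lemma skevalC c (f : {poly K}) a : skeval (c%:P * f) a = c * skeval f a.
Proof.
have le : (size (c%:P * f)%R <= size f)%N by rewrite mul_polyC size_scale_leq.
rewrite (skeval_widen _ le) mulr_sumr; apply: eq_bigr => i _.
by rewrite coefCM mulrA.
Qed.

Lemma skeval1 a : skeval 1 a = 1.
Proof. by rewrite /skeval size_poly1 big_ord1 coef1 mul1r. Qed.

Lemma skevalXn k a : skeval 'X^k a = norm k a.
Proof.
rewrite /skeval size_polyXn big_ord_recr /= big1 ?add0r ?coefXn ?eqxx ?mul1r // => i _.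
by rewrite coefXn (ltn_eqF (ltn_ord i)) mul0r.
Qed.

Lemma skeval_tmul (g : {poly K}) a :
  skeval (tmul g) a = s (skeval g a) * a + d (skeval g a).
Proof.
rewrite (skeval_widen _ (size_tmul g)).
under eq_bigr => i _ do rewrite coef_tmul mulrDl.
rewrite big_split /= big_ord_recl /= mul0r add0r big_ord_recr /= nth_default //.
rewrite d0 mul0r addr0 /skeval (big_morph s sD s0) (big_morph d dD d0) mulr_suml.
rewrite -big_split /= -big_split /=; apply: eq_bigr => i _.
by rewrite sM dM mulrDr !mulrA -!addrA (addrC (_ * d _)).
Qed.

Lemma skeval_skmul (q g : {poly K}) a : skeval g a = 0 -> skeval (skmul s d q g) a = 0.
Proof.
move=> ga0; have iter_t i : skeval (iter i tmul g) a = 0.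
  by elim: i => //= i IHi; rewrite skeval_tmul IHi s0 d0 mul0r addr0.
rewrite /skmul (big_morph _ (fun f h => skevalD f h a) (skeval0 a)) big1 // => i _.
by rewrite skevalC iter_t mulr0.
Qed.

Lemma skeval_XsubC a : skeval ('X - a%:P) a = 0.
Proof.
rewrite /skeval size_XsubC !big_ord_recl big_ord0 /= !coefB coefX coefC /= coefX coefC /=.
by rewrite s1 d1 addr0 mul1r subr0 mul1r sub0r mulr1 addr0 addNr.
Qed.

Lemma Xn_divmod k a : {q | 'X^k = skmul s d q ('X - a%:P) + (norm k a)%:P}.
Proof.
elim: k => [|k [q IHq]] /=; first by exists 0; rewrite skmul0 add0r expr0.
exists (tmul q + (s (norm k a))%:P).
rewrite -tmulXn IHq tmulD skmulD skmul_tmul tmul_polyC skmul_polyC.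
by rewrite mulrBr polyCD polyCM -!addrA addKr.
Qed.

Lemma skeval_divmod (f : {poly K}) a :
  exists q, f = skmul s d q ('X - a%:P) + (skeval f a)%:P.
Proof.
exists (\sum_(i < size f) (f`_i)%:P * sval (Xn_divmod i a)).
rewrite skmul_sum; under eq_bigr => i _ do rewrite skmulC.
rewrite /skeval rmorph_sum -big_split /= -{1}[f]coefK poly_def.
by apply: eq_bigr => i _; rewrite -mul_polyC {1}(svalP (Xn_divmod i a)) mulrDr polyCM.
Qed.

Lemma rroot_skeval (f : {poly K}) a : rroot s d f a <-> skeval f a = 0.
Proof.
split=> [[q ->]|fa0]; first exact/skeval_skmul/skeval_XsubC.
by have [q qP] := skeval_divmod f a; exists q; rewrite qP fa0 addr0.
Qed.

Definition pseudo (a y : K) : K := s y * a + d y.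
Definition skconj (a x : K) : K := s x * a * x^-1 + d x * x^-1.

Lemma norm_conj a x k : x \is a GRing.unit ->
  norm k (skconj a x) = iter k (pseudo a) x * x^-1.
Proof.
move=> Ux; elim: k => [|k IHk] /=; first by rewrite mulrV.
set y := iter k (pseudo a) x; have -> : pseudo a y = s y * a + d y by [].
rewrite IHk sM dM (dV Ux) /skconj mulrN mulrDl !mulrDr !mulrA.
rewrite -(mulrA (s y) _ (s x)) sVK // mulr1 -!addrA; congr (_ + _).
by rewrite addrCA subrr addr0.
Qed.

Lemma rroot_conj (f : {poly K}) a x : x \is a GRing.unit ->
  rroot s d f (skconj a x) <-> \sum_(i < size f) f`_i * iter i (pseudo a) x = 0.
Proof.
move=> Ux; rewrite rroot_skeval /skeval.
under eq_bigr => i _ do rewrite norm_conj // mulrA.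
by rewrite -mulr_suml; split=> [/(congr1 ( *%R^~ x))|->]; rewrite ?mul0r ?divrK.
Qed.

Lemma norm_root_conj0 a k : norm k a \is a GRing.unit -> norm k.+1 a = 0 ->
  a = skconj 0 (norm k a)^-1.
Proof.
move=> Uy /= Ny; set y := norm k a in Uy Ny *.
have -> : a = - (s y^-1 * d y).
  rewrite -[a]mul1r -(sVK Uy) -mulrA -mulrN; congr (_ * _).
  by apply/eqP; rewrite -addr_eq0 Ny.
by rewrite /skconj invrK (dV Uy) mulr0 mul0r add0r mulNr divrK.
Qed.

End OreExtension.

Section OuterIndependence.
Variables (K : unitRingType) (sigma : {rmorphism K -> K}) (n : nat).
Hypothesis divK : division_ring K.
Hypothesis sigma_bij : bijective sigma.
Hypothesis outer : forall i, (1 <= i < n)%N -> ~ inner_aut (iter i sigma).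

Lemma iter_sigmaM i x y : iter i sigma (x * y) = iter i sigma x * iter i sigma y.
Proof. by elim: i => //= i ->; rewrite rmorphM. Qed.

Lemma iter_sigma0 i : iter i sigma 0 = 0.
Proof. by elim: i => //= i ->; rewrite rmorph0. Qed.

Lemma iter_sigma1 i : iter i sigma 1 = 1.
Proof. by elim: i => //= i ->; rewrite rmorph1. Qed.

Lemma iter_sigma_surj i z : exists y, iter i sigma y = z.
Proof.
have [g sg gs] := sigma_bij; exists (iter i g z).
by elim: i z => //= i IHi z; rewrite -iterS iterSr gs IHi.
Qed.

Definition annihilates (c : nat -> K) : Prop :=
  forall x, \sum_(i < n) c i * iter i sigma x = 0.
Definition support (c : nat -> K) : {set 'I_n} := [set i : 'I_n | c i != 0].

Lemma annihilates_scale u c : annihilates c -> annihilates (fun j => u * c j).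
Proof.
move=> Ac x; transitivity (u * \sum_(i < n) c i * iter i sigma x); last by rewrite Ac mulr0.
by rewrite mulr_sumr; apply: eq_bigr => i _; rewrite mulrA.
Qed.

Definition twist (c : nat -> K) (i0 : nat) (y : K) (j : nat) : K :=
  c j * iter j sigma y - iter i0 sigma y * c j.

Lemma annihilates_twist c i0 y : annihilates c -> annihilates (twist c i0 y).
Proof.
move=> Ac x; transitivity (\sum_(j < n) c j * iter j sigma (y * x)
  - iter i0 sigma y * \sum_(j < n) c j * iter j sigma x); last by rewrite !Ac mulr0 subr0.
rewrite mulr_sumr -sumrB; apply: eq_bigr => j _.
by rewrite /twist iter_sigmaM mulrBl !mulrA.
Qed.

Lemma support_scale u c : u \is a GRing.unit -> support (fun j => u * c j) = support c.
Proof. by move=> Uu; apply/setP => j; rewrite !inE (mulrI_eq0 _ (mulrI Uu)). Qed.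

Lemma support_twist (c : nat -> K) (i0 : 'I_n) (y : K) :
  c i0 = 1 -> support (twist c i0 y) \subset support c :\ i0.
Proof.
move=> ci0; apply/subsetP => j; rewrite !inE /twist; apply: contraNT.
case/nandP => [/negbNE/eqP ->|/negbNE/eqP ->]; last by rewrite mulr0 mul0r subrr.
by rewrite ci0 mul1r mulr1 subrr.
Qed.

Lemma twisted_commute_outer i j v : (i < j < n)%N -> v \is a GRing.unit ->
  ~ (forall y, v * iter j sigma y = iter i sigma y * v).
Proof.
case/andP=> lt_ij lt_jn Uv comm; apply: (outer (i := j - i)).
  by rewrite subn_gt0 lt_ij (leq_ltn_trans (leq_subr _ _) lt_jn).
exists v^-1; split; first by rewrite unitrV.
move=> z; have [y <-] := iter_sigma_surj i z.
by rewrite -iterD subnK ?(ltnW lt_ij) // invrK -mulrA -comm mulKr.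
Qed.

Lemma support_set0 c : support c = set0 -> forall j, (j < n)%N -> c j = 0.
Proof.
move=> S0 j lt_jn; apply/eqP; have /setP/(_ (Ordinal lt_jn)) := S0.
by rewrite !inE => /negbFE.
Qed.

(* Induction on the size of the support: normalize the first nonzero
   coefficient c_(i0) to 1; by induction every twist vanishes, so each c_j
   commutes as in [twisted_commute_outer], forcing c_j = 0 for j ≠ i0; then
   evaluating at 1 gives c_(i0) = 0 as well. *)
Lemma annihilates_eq0 c : annihilates c -> forall i, (i < n)%N -> c i = 0.
Proof.
suff supp0 k : forall c, (#|support c| <= k)%N -> annihilates c -> support c = set0.
  by move=> Ac; apply/support_set0/(supp0 _ c (leqnn _) Ac).
elim: k => [|k IHk] {}c le_ck Ac; first by apply: cards0_eq; apply/eqP; rewrite -leqn0.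
apply: contraTeq isT => /set0Pn[j1]; rewrite inE => cj1.
have ex_nz : exists j, (j < n)%N && (c j != 0) by exists j1; rewrite ltn_ord cj1.
have [i0 /andP[lt_i0n ci0] min_i0] := ex_minnP ex_nz.
have Uci0 : c i0 \is a GRing.unit by apply: divK.
pose c' j := (c i0)^-1 * c j; set o0 := Ordinal lt_i0n.
have c'i0 : c' o0 = 1 by rewrite /c' mulVr.
have supp' : support c' = support c by apply: support_scale; rewrite unitrV.
have comm y j : (j < n)%N -> c' j * iter j sigma y = iter i0 sigma y * c' j.
  move=> lt_jn; apply/eqP; rewrite -subr_eq0; apply/eqP.
  apply: (support_set0 (IHk (twist c' i0 y) _ _)) lt_jn; last first.
    exact/annihilates_twist/annihilates_scale.
  apply: leq_trans (subset_leq_card (support_twist y c'i0)) _.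
  by rewrite -ltnS (cardsD1 o0) supp' inE ci0 in le_ck *.
have others j : (j < n)%N -> j != i0 -> c j = 0.
  move=> lt_jn ne_ji0; apply/eqP; apply: contraT => cj; exfalso.
  have lt_i0j : (i0 < j)%N by rewrite ltn_neqAle eq_sym ne_ji0 min_i0 // lt_jn cj.
  apply: (@twisted_commute_outer i0 j (c' j)); first by rewrite lt_i0j.
    by rewrite unitrMl ?unitrV // divK.
  by move=> y; apply: comm.
move: (Ac 1); rewrite (bigD1 o0) //= big1 => [|j ne_ji0]; last first.
  by rewrite others ?mul0r.
by rewrite iter_sigma1 mulr1 addr0 => /eqP; rewrite (negbTE ci0).
Qed.

End OuterIndependence.

Lemma sum_shift_periodic (V : zmodType) (F : nat -> V) n : F n = F 0%N ->
  \sum_(i < n) F i.+1 = \sum_(i < n) F i.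
Proof.
move=> Fn; have /= recl := big_ord_recl n F; have /= recr := big_ord_recr n F.
by apply: (addrI (F 0%N)); rewrite -recl recr Fn addrC.
Qed.

Section SkewPolynomials.
Variables (K : unitRingType) (sigma : {rmorphism K -> K}) (n : nat).
Hypothesis divK : division_ring K.
Hypothesis sigma_bij : bijective sigma.
Hypothesis n_gt0 : (0 < n)%N.
Hypothesis sigma_n : forall x, iter n sigma x = x.
Hypothesis outer : forall i, (1 <= i < n)%N -> ~ inner_aut (iter i sigma).

Local Notation d0 := (fun _ : K => 0 : K).
Let sD : forall x y, sigma (x + y) = sigma x + sigma y. Proof. exact: rmorphD. Qed.
Let sM : forall x y, sigma (x * y) = sigma x * sigma y. Proof. exact: rmorphM. Qed.
Let s1 : sigma 1 = 1. Proof. exact: rmorph1. Qed.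
Let dD : forall x y : K, d0 (x + y) = d0 x + d0 y. Proof. by move=> x y; rewrite addr0. Qed.
Let dM : forall x y : K, d0 (x * y) = d0 x * y + sigma x * d0 y.
Proof. by move=> x y; rewrite mul0r mulr0 addr0. Qed.

Lemma pseudo_sigma1 : pseudo sigma d0 1 =1 sigma.
Proof. by move=> y; rewrite /pseudo mulr1 addr0. Qed.

Lemma skconj_sigma1 x : skconj sigma d0 1 x = sigma x * x^-1.
Proof. by rewrite /skconj mulr1 mul0r addr0. Qed.

Lemma rroot_sigma_conj (f : {poly K}) x : x != 0 ->
  rroot sigma d0 f (sigma x * x^-1) <-> \sum_(i < size f) f`_i * iter i sigma x = 0.
Proof.
move=> x_neq0; rewrite -skconj_sigma1 (rroot_conj sD sM s1 dD dM _ _ (divK x_neq0)).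
by under eq_bigr => i _ do rewrite (eq_iter pseudo_sigma1).
Qed.

Lemma norm_sigma_unit a k : a \is a GRing.unit -> norm sigma d0 k a \is a GRing.unit.
Proof. by move=> Ua; elim: k => [|k IHk] /=; rewrite ?unitr1 // addr0 unitrMr ?rmorph_unit. Qed.

(* With M_k = N_k(a)⁻¹ one has σ(M_k) = a M_(k+1) and M_n = M_0, so
   z = Σ_(i<n) M_i σ^i(y) satisfies σ(z) = a z; independence gives z ≠ 0. *)
Lemma hilbert90 a : norm sigma d0 n a = 1 -> exists x, x != 0 /\ a = sigma x * x^-1.
Proof.
move=> Na1; have Ua : a \is a GRing.unit.
  apply: divK; apply: contra_eqN Na1 => /eqP ->.
  by case: n n_gt0 => //= m _; rewrite mulr0 addr0 eq_sym oner_eq0.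
pose M k := (norm sigma d0 k a)^-1.
have sigmaM k : sigma (M k) = a * M k.+1.
  rewrite /M /= addr0 invrM ?rmorph_unit ?norm_sigma_unit //.
  by rewrite mulrA mulrV // mul1r rmorphV ?norm_sigma_unit.
pose z y := \sum_(i < n) M i * iter i sigma y.
have [y z_neq0] : exists y, z y != 0.
  apply: NNPP => all_z0; have AM : annihilates sigma n M.
    by move=> x; apply/eqP; apply: contraT => zx; case: all_z0; exists x.
  have := annihilates_eq0 divK sigma_bij outer AM n_gt0.
  by rewrite /M /= invr1 => /eqP; rewrite oner_eq0.
exists (z y); split => //.
suff sigma_z : sigma (z y) = a * z y by rewrite sigma_z mulrK ?divK.
rewrite /z rmorph_sum.
under eq_bigr => i _ do rewrite rmorphM sigmaM -mulrA -iterS.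
rewrite -mulr_sumr (@sum_shift_periodic _ (fun i => M i * iter i sigma y)) //.
by rewrite sigma_n /M /= Na1.
Qed.

Lemma skew_roots a :
  rroot sigma d0 ('X^n - 1) a <-> exists x : K, x != 0 /\ a = sigma x * x^-1.
Proof.
rewrite (rroot_skeval sD sM s1 dD dM) skevalD skevalN skevalXn skeval1.
split=> [/subr0_eq|[x [x_neq0 ->]]]; first exact: hilbert90.
rewrite -skconj_sigma1 (norm_conj sM s1 dM _ _ (divK x_neq0)).
by rewrite (eq_iter pseudo_sigma1) sigma_n mulrV ?subrr ?divK.
Qed.

(* No nonzero polynomial of degree < n vanishes on all the σ(x)x⁻¹:
   its coefficients would annihilate Σ f_i σ^i. *)
Lemma skew_minimal (f : {poly K}) : f != 0 -> (size f <= n)%N ->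
  ~ (forall x : K, x != 0 -> rroot sigma d0 f (sigma x * x^-1)).
Proof.
move=> f_neq0 le_fn vanish; have size_f_gt0 : (0 < size f)%N by rewrite size_poly_gt0.
have Af : annihilates sigma n (fun i => f`_i).
  move=> x; have [->|x_neq0] := eqVneq x 0.
    by apply: big1 => i _; rewrite iter_sigma0 mulr0.
  rewrite -(@sum_ord_widen _ (fun i => f`_i * iter i sigma x) _ _ le_fn).
    exact/(rroot_sigma_conj _ x_neq0)/vanish.
  by move=> i le_fi; rewrite nth_default ?mul0r.
move: f_neq0; rewrite -lead_coef_eq0 /lead_coef.
by rewrite (annihilates_eq0 divK sigma_bij outer Af) ?eqxx ?prednK.
Qed.

End SkewPolynomials.

Lemma last_nonzero (V : zmodType) (u : nat -> V) e : u 0%N != 0 -> u e = 0 ->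
  exists k, u k != 0 /\ u k.+1 = 0.
Proof.
elim: e => [|e IHe] u0 ue; first by rewrite ue eqxx in u0.
by have [/IHe|ue_neq0] := eqVneq (u e) 0; [apply|exists e].
Qed.

Section DifferentialPolynomials.
(* Part (b): K[t;δ] is the Ore extension with s = id and d = δ; e stands for p^n. *)
Variables (K : unitRingType) (delta : K -> K) (e : nat).
Hypothesis divK : division_ring K.
Hypothesis der : derivation delta.
Hypothesis delta_nil : forall x, iter e delta x = 0.
Hypothesis delta_indep : forall (m : nat) (c : nat -> K), (m < e)%N ->
  (forall x, \sum_(i < m.+1) c i * iter i delta x = 0) -> forall i, (i <= m)%N -> c i = 0.

Let sD : forall x y : K, id (x + y) = id x + id y. Proof. by []. Qed.
Let sM : forall x y : K, id (x * y) = id x * id y. Proof. by []. Qed.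
Let s1 : id (1 : K) = 1. Proof. by []. Qed.
Let dD : forall x y, delta (x + y) = delta x + delta y. Proof. exact: der.1. Qed.
Let dM : forall x y, delta (x * y) = delta x * y + id x * delta y. Proof. exact: der.2. Qed.

Lemma pseudo_delta0 : pseudo id delta 0 =1 delta.
Proof. by move=> y; rewrite /pseudo mulr0 add0r. Qed.

Lemma skconj_delta0 x : skconj id delta 0 x = delta x * x^-1.
Proof. by rewrite /skconj mulr0 mul0r add0r. Qed.

Lemma rroot_delta_conj (f : {poly K}) x : x != 0 ->
  rroot id delta f (delta x * x^-1) <-> \sum_(i < size f) f`_i * iter i delta x = 0.
Proof.
move=> x_neq0; rewrite -skconj_delta0 (rroot_conj sD sM s1 dD dM _ _ (divK x_neq0)).
by under eq_bigr => i _ do rewrite (eq_iter pseudo_delta0).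
Qed.

Lemma differential_roots a :
  rroot id delta 'X^e a <-> exists x : K, x != 0 /\ a = delta x * x^-1.
Proof.
rewrite (rroot_skeval sD sM s1 dD dM) skevalXn; split=> [Ne0|[x [x_neq0 ->]]].
  have [k [Nk_neq0 Nk1]] := @last_nonzero _ (fun k => norm id delta k a) e (oner_neq0 K) Ne0.
  exists (norm id delta k a)^-1; rewrite invr_eq0 -skconj_delta0; split => //.
  exact: (norm_root_conj0 sM s1 dM (divK Nk_neq0)).
rewrite -skconj_delta0 (norm_conj sM s1 dM _ _ (divK x_neq0)).
by rewrite (eq_iter pseudo_delta0) delta_nil mul0r.
Qed.

(* No nonzero polynomial of degree < e vanishes on all the δ(x)x⁻¹:
   its coefficients would give a nontrivial identity Σ f_i δ^i = 0. *)
Lemma differential_minimal (f : {poly K}) : f != 0 -> (size f <= e)%N ->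
  ~ (forall x : K, x != 0 -> rroot id delta f (delta x * x^-1)).
Proof.
move=> f_neq0 le_fe vanish; have size_f_gt0 : (0 < size f)%N by rewrite size_poly_gt0.
have iter_delta0 i : iter i delta 0 = 0 by elim: i => //= i ->; apply: d0 dD.
have rel x : \sum_(i < (size f).-1.+1) f`_i * iter i delta x = 0.
  rewrite prednK //; have [->|x_neq0] := eqVneq x 0.
    by apply: big1 => i _; rewrite iter_delta0 mulr0.
  exact/(rroot_delta_conj _ x_neq0)/vanish.
move: f_neq0; rewrite -lead_coef_eq0 /lead_coef (delta_indep _ rel) ?eqxx //.
by rewrite prednK.
Qed.

End DifferentialPolynomials.
Theorem proposition2p9 :
  (* (a) *)
  (forall (K : unitRingType) (sigma : {rmorphism K -> K}) (n : nat),
     division_ring K ->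
     bijective sigma ->
     (0 < n)%N ->
     (forall x, iter n sigma x = x) ->
     (forall i, (0 < i < n)%N -> exists x, iter i sigma x != x) ->
     (forall i, (1 <= i < n)%N -> ~ inner_aut (iter i sigma)) ->
     (forall a : K, rroot sigma (fun _ => 0) ('X^n - 1) a <->
        exists x : K, x != 0 /\ a = sigma x * x^-1) /\
     (forall f : {poly K}, f != 0 -> (size f <= n)%N ->
        ~ (forall x : K, x != 0 -> rroot sigma (fun _ => 0) f (sigma x * x^-1))))
  /\
  (* (b) *)
  (forall (K : unitRingType) (p : nat) (delta : K -> K) (n : nat),
     division_ring K ->
     p \in [pchar K] ->
     derivation delta ->
     (forall x, iter (p ^ n) delta x = 0) ->
     (forall (m : nat) (c : nat -> K), (m < p ^ n)%N ->
        (forall x, \sum_(i < m.+1) c i * iter i delta x = 0) ->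
        forall i, (i <= m)%N -> c i = 0) ->
     (forall a : K, rroot id delta ('X^(p ^ n)) a <->
        exists x : K, x != 0 /\ a = delta x * x^-1) /\
     (forall f : {poly K}, f != 0 -> (size f <= p ^ n)%N ->
        ~ (forall x : K, x != 0 -> rroot id delta f (delta x * x^-1)))).
Proof.
split.
  move=> K sigma n divK sigma_bij n_gt0 sigma_n _ outer; split.
    exact: (skew_roots divK sigma_bij n_gt0 sigma_n outer).
  exact: (skew_minimal divK sigma_bij outer).
move=> K p delta n divK _ der delta_nil delta_indep; split.
  exact: (differential_roots divK der delta_nil).
exact: (differential_minimal divK der delta_indep).
Qed.
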